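(* Let $\beta\in[0,1]$, $n\in\mathbb{N}$, and let $u:\{k\in\mathbb{N}_0^3: k_1+k_2+k_3\le n\}\to[0,\infty]$ be a function such that for every $m\in\{0,\dots,n\}$ the restriction of $u$ to $\{k\in\mathbb{N}_0^3: k_1+k_2+k_3=m\}$ is an upper $\beta$-confidence bound for the parameter $p\mapsto \min\{\frac{1-p_2}{1-p_1},1\}$ in the trinomial model $(\mathrm{M}_{m,p}: p\in\mathrm{prob}(\{1,2,3\}))$. Then the function $k\mapsto u(k_{10},k_{01},k_{11})$ on $\{k\in\mathbb{N}_0^{\{0,1\}^2}:k_{++}=n\}$ is an upper $\beta$-confidence bound for the parameter $(\pi,\chi)\mapsto\chi^{(1)}_{1|1}$ in the restricted latent class model $\mathcal{P}_{2,\le}$.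
   Context: Convention: $x/0:=\infty$ for $x>0$. For a finite set $\mathcal{X}$, $\mathrm{prob}(\mathcal{X})$ is the set of probability densities on $\mathcal{X}$; $\mathrm{markov}(\mathcal{X},\mathcal{Y})$ the set of maps $(x,y)\mapsto p_{y|x}$ with $p_{\cdot|x}\in\mathrm{prob}(\mathcal{Y})$ for all $x$. $\mathrm{M}_{n,p}$ denotes the multinomial distribution with sample size $n$ and probability vector $p$. A subscript $+$ denotes summation over the replaced index. Let $\Theta_2:=\mathrm{prob}(\{0,1\})\times\mathrm{markov}(\{0,1\},\{0,1\}^2)$, $\theta=(\pi,\chi)$, $\mu(\theta)_j=\sum_{i=0}^1\pi_i\chi_{j|i}$ for $j\in\{0,1\}^2$, $P_\theta:=\mathrm{M}_{n,\mu(\theta)}$ on $\{k\in\mathbb{N}_0^{\{0,1\}^2}:k_{++}=n\}$. Put $\chi^{(1)}_{\iota|i}:=\chi_{\iota0|i}+\chi_{\iota1|i}$ and $\chi^{(2)}_{\iota|i}:=\chi_{0\iota|i}+\chi_{1\iota|i}$. The restricted latent class model is $\mathcal{P}_{2,\le}:=(P_\theta:\theta\in\Theta_{2,\le})$ with $\Theta_{2,\le}:=\{(\pi,\chi)\in\Theta_2:\chi^{(1)}_{0|0}\le\chi^{(2)}_{0|0}\}$. For a model $(P_\theta:\theta\in\Theta)$ and parameter $\kappa:\Theta\to\overline{\mathbb{R}}$, a measurable $\overline{\kappa}$ is an upper $\beta$-confidence bound if $P_\theta(\overline{\kappa}\ge\kappa(\theta))\ge\beta$ for all $\theta\in\Theta$.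 *)

From mathcomp Require Import all_boot all_order all_algebra.
From mathcomp Require Import reals constructive_ereal.
Set Implicit Arguments. Unset Strict Implicit. Unset Printing Implicit Defensive.
Import Order.TTheory GRing.Theory Num.Theory.
Local Open Scope ring_scope.

Definition is_prob (R : realType) (X : finType) (p : X -> R) : Prop :=
  (forall x, 0 <= p x) /\ \sum_(x : X) p x = 1.

(* chi : X -> Y -> R, chi x y = chi_{y|x}, is a Markov kernel. *)
Definition is_markov (R : realType) (X Y : finType) (chi : X -> Y -> R) : Prop :=
  forall x, is_prob (chi x).

(* Every such k has k i <= n, so k is represented
   as a finite function into 'I_n.+1; only those with total n get mass. *)
Definition multinom (R : realType) (I : finType) (n : nat) (p : I -> R)
    (A : pred {ffun I -> 'I_n.+1}) : R :=
  \sum_(k : {ffun I -> 'I_n.+1} | ((\sum_(i : I) (k i : nat))%N == n) && A k)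
     ((n`!)%:R / (\prod_(i : I) (k i)`!)%:R * \prod_(i : I) p i ^+ (k i : nat)).

(* Division with the convention x/0 := +oo (used only for x > 0). *)
Definition cdiv (R : realType) (x y : R) : \bar R :=
  if y == 0 then +oo%E else (x / y)%:E.

(* Trinomial parameter p |-> min{(1-p_2)/(1-p_1), 1}, with p_1,p_2,p_3
   represented by p ord0, p (inord 1), p (inord 2) for p : 'I_3 -> R. *)
Definition tri_param (R : realType) (p : 'I_3 -> R) : \bar R :=
  Order.min (cdiv (1 - p (inord 1)) (1 - p ord0)) 1%E.

(* Latent class model with two binary observed variables:
   latent index i : bool (false = 0, true = 1),
   observed j : bool * bool  ((a,b) = j_1 j_2). *)
Definition lc_mu (R : realType) (pi : bool -> R) (chi : bool -> bool * bool -> R)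
    (j : bool * bool) : R := \sum_(i : bool) pi i * chi i j.

Definition chi1 (R : realType) (chi : bool -> bool * bool -> R) (iota i : bool) : R :=
  chi i (iota, false) + chi i (iota, true).
Definition chi2 (R : realType) (chi : bool -> bool * bool -> R) (iota i : bool) : R :=
  chi i (false, iota) + chi i (true, iota).

Definition Theta2le (R : realType) (pi : bool -> R) (chi : bool -> bool * bool -> R) : Prop :=
  is_prob pi /\ is_markov chi /\ chi1 chi false false <= chi2 chi false false.
Arguments multinom {R I} n p A.

From mathcomp Require Import all_boot all_order all_algebra.
From mathcomp Require Import reals constructive_ereal.
From mathcomp Require Import ring lra zify.
Set Implicit Arguments. Unset Strict Implicit. Unset Printing Implicit Defensive.
Import Order.TTheory GRing.Theory Num.Theory.
Local Open Scope ring_scope.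

(* Let mu be the cell probabilities of the latent class model and s the mass off
   the cell 00.  The number m = n - k_00 of observations off 00 is binomial(n, s),
   and given m the counts (k_10, k_01, k_11) are trinomial with parameter
   q = (mu_10, mu_01, mu_11) / s.  The restriction chi1_{0|0} <= chi2_{0|0} yields
   chi1_{1|1} <= min((1 - q_2) / (1 - q_1), 1), so on every slice m the coverage
   event of the trinomial bound is contained in {chi1_{1|1} <= u}; averaging its
   probability, at least beta, over the binomial law of m gives the claim. *)


Lemma big_ord3 (T : Type) (idx : T) (op : T -> T -> T) (F : 'I_3 -> T) :
  \big[op/idx]_(i < 3) F i = op (F ord0) (op (F (inord 1)) (op (F (inord 2)) idx)).
Proof.
rewrite !big_ord_recl big_ord0.
by congr (op _ (op (F _) (op (F _) _))); apply: val_inj; rewrite /= inordK.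
Qed.

Lemma big_pair_bool (T : Type) (idx : T) (op : Monoid.com_law idx) (F : bool * bool -> T) :
  \big[op/idx]_(j : bool * bool) F j =
  op (op (F (true, true)) (F (true, false))) (op (F (false, true)) (F (false, false))).
Proof.
transitivity (\big[op/idx]_(j : bool * bool | predT j.1 && predT j.2) F (j.1, j.2)).
  by apply: eq_bigr => -[].
by rewrite -(pair_big predT predT (fun a b => F (a, b))) !big_bool.
Qed.

Lemma ler_sum_inj (R : numDomainType) (I J : finType) (h : J -> I)
    (Q : pred J) (P : pred I) (F : I -> R) :
  (forall j, Q j -> P (h j)) -> {in Q &, injective h} ->
  (forall i, P i -> 0 <= F i) ->
  \sum_(j | Q j) F (h j) <= \sum_(i | P i) F i.
Proof.
move=> QP h_inj F_ge0.
rewrite -big_imset //= (bigID (mem (h @: Q)) P) /=.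
have -> : \sum_(i in h @: Q) F i = \sum_(i | P i && (i \in h @: Q)) F i.
  apply: eq_bigl => i; apply/idP/idP => [hQi|/andP[] //].
  by rewrite hQi andbT; case/imsetP: hQi => j Qj ->; apply: QP.
by rewrite lerDl sumr_ge0 // => i /andP[Pi _]; apply: F_ge0.
Qed.

Section TrinomialReduction.

Variable R : realType.

Lemma multinom_subset (I : finType) (n : nat) (p : I -> R) (A B : pred {ffun I -> 'I_n.+1}) :
  (forall i, 0 <= p i) -> (forall k, A k -> B k) -> multinom n p A <= multinom n p B.
Proof.
move=> p_ge0 AB; rewrite /multinom big_mkcond [leRHS]big_mkcond /=.
apply: ler_sum => k _; case: (_ == n) => //=.
case: ifP => [/AB -> // | _]; case: ifP => // _.
by rewrite mulr_ge0 ?prodr_ge0 ?divr_ge0 // => i _; rewrite exprn_ge0.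
Qed.

Definition tri_cell (i : 'I_3) : bool * bool :=
  match nat_of_ord i with 0 => (true, false) | 1 => (false, true) | _ => (true, true) end.

Lemma tri_cellE : [/\ tri_cell ord0 = (true, false), tri_cell (inord 1) = (false, true)
  & tri_cell (inord 2) = (true, true)].
Proof. by rewrite /tri_cell !inordK. Qed.

Definition embed_counts (n m : nat) (k : {ffun 'I_3 -> 'I_m.+1}) : {ffun bool * bool -> 'I_n.+1} :=
  [ffun j => inord (match j with
                    | (false, false) => n - m
                    | (true, false) => k ord0
                    | (false, true) => k (inord 1)
                    | (true, true) => k (inord 2) end)].

Arguments embed_counts n {m}.

Section EmbedCounts.

Variables (n m : nat) (k : {ffun 'I_3 -> 'I_m.+1}).
Hypothesis le_mn : (m <= n)%N.

Lemma embed_counts00 : embed_counts n k (false, false) = (n - m)%N :> nat.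
Proof. by rewrite ffunE inordK // ltnS leq_subr. Qed.

Lemma embed_counts_tri_cell i : embed_counts n k (tri_cell i) = k i :> nat.
Proof.
have lt_k j : (k j < n.+1)%N by apply: leq_trans (ltn_ord _) _.
case: i => -[|[|[|i]]] // lti; rewrite ffunE inordK //;
  by congr (nat_of_ord (k _)); apply: val_inj; rewrite /= ?inordK.
Qed.

End EmbedCounts.

Lemma embed_counts_inj (n m : nat) : (m <= n)%N -> injective (@embed_counts n m).
Proof.
move=> le_mn k k' ekk'; apply/ffunP => i; apply: val_inj => /=.
by rewrite -!(embed_counts_tri_cell _ le_mn) ekk'.
Qed.

Lemma multinom_term_embed (n m : nat) (mu : bool * bool -> R) (s : R) (q : 'I_3 -> R)
    (k : {ffun 'I_3 -> 'I_m.+1}) :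
  (m <= n)%N -> (\sum_(i < 3) (k i : nat))%N = m ->
  (forall i, mu (tri_cell i) = s * q i) ->
  (n`!)%:R / (\prod_(j : bool * bool) (embed_counts n k j)`!)%:R
      * \prod_(j : bool * bool) mu j ^+ embed_counts n k j
  = (mu (false, false) ^+ (n - m) * s ^+ m *+ 'C(n, m))
      * ((m`!)%:R / (\prod_(i < 3) (k i)`!)%:R * \prod_(i < 3) q i ^+ k i).
Proof.
move=> le_mn sum_k mu_q; have [c0 c1 c2] := tri_cellE.
rewrite !big_pair_bool !big_ord3 /= -c0 -c1 -c2 !mu_q !embed_counts_tri_cell //.
rewrite embed_counts00 //.
have s_m : s ^+ m = s ^+ k ord0 * (s ^+ k (inord 1) * s ^+ k (inord 2)).
  by rewrite big_ord3 addn0 in sum_k; rewrite -!exprD sum_k.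
have fact_n : n`! = ('C(n, m) * (m`! * (n - m)`!))%N by rewrite bin_fact.
have fact_neq0 j : (j`!)%:R != 0 :> R by rewrite pnatr_eq0 -lt0n fact_gt0.
rewrite s_m fact_n !natrM !exprMn mulr_natr.
by field; rewrite !fact_neq0.
Qed.

Lemma multinom_ge_mixture (n : nat) (mu : bool * bool -> R) (s : R) (q : 'I_3 -> R)
    (A : nat -> nat -> nat -> bool) :
  (forall j, 0 <= mu j) -> (forall i, mu (tri_cell i) = s * q i) ->
  \sum_(m < n.+1) (mu (false, false) ^+ (n - m) * s ^+ m *+ 'C(n, m))
      * multinom m q (fun k => A (k ord0) (k (inord 1)) (k (inord 2)))
  <= multinom n mu (fun k => A (k (true, false)) (k (false, true)) (k (true, true))).
Proof.
move=> mu_ge0 mu_q.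
pose size_off00 (k : {ffun bool * bool -> 'I_n.+1}) : 'I_n.+1 := inord (n - k (false, false)).
rewrite /multinom (partition_big size_off00 predT) //=.
apply: ler_sum => m _; have le_mn : (m <= n)%N by rewrite -ltnS.
rewrite mulr_sumr.
under [leLHS]eq_bigr => k /andP[/eqP sum_k _] do
  rewrite -(multinom_term_embed le_mn sum_k mu_q).
apply: ler_sum_inj => [k /andP[/eqP sum_k Ak]||k _].
- have [c0 c1 c2] := tri_cellE.
  rewrite /size_off00 big_pair_bool /= -c0 -c1 -c2 !embed_counts_tri_cell //.
  rewrite embed_counts00 // Ak andbT.
  rewrite big_ord3 addn0 in sum_k.
  apply/andP; split; first by apply/eqP; lia.
  by apply/eqP/val_inj; rewrite /= subKn // inordK.
- by move=> k k' _ _; apply: embed_counts_inj.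
- by rewrite mulr_ge0 ?prodr_ge0 ?divr_ge0 // => j _; rewrite exprn_ge0.
Qed.

Definition cond_mass (mu : bool * bool -> R) : R :=
  mu (true, false) + mu (false, true) + mu (true, true).

(* The law of the three cells other than (0,0), conditionally on that event;
   a point mass when the event has probability 0. *)
Definition cond_tri (mu : bool * bool -> R) (i : 'I_3) : R :=
  if cond_mass mu == 0 then (i == 2 :> nat)%:R else mu (tri_cell i) / cond_mass mu.

Section CondTri.

Variable mu : bool * bool -> R.
Hypothesis mu_ge0 : forall j, 0 <= mu j.

Lemma cond_mass_ge0 : 0 <= cond_mass mu.
Proof. by rewrite !addr_ge0. Qed.

Lemma mu_tri_cell i : mu (tri_cell i) = cond_mass mu * cond_tri mu i.
Proof.
rewrite /cond_tri; case: eqP => [s0|/eqP s_neq0]; last by rewrite mulrC divfK.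
rewrite s0 mul0r; move: s0.
have := mu_ge0 (true, false); have := mu_ge0 (false, true); have := mu_ge0 (true, true).
by rewrite /cond_mass /tri_cell; case: (nat_of_ord i) => [|[|j]] /=; lra.
Qed.

Lemma cond_tri_prob : is_prob (cond_tri mu).
Proof.
split=> [i|]; rewrite /cond_tri.
  by case: eqP => _; rewrite ?ler0n ?divr_ge0 ?cond_mass_ge0.
rewrite big_ord3; case: eqP => [_|/eqP s_neq0]; first by rewrite !inordK //= !add0r addr0.
by rewrite /tri_cell !inordK //= addr0 -!mulrDl addrA divff.
Qed.

End CondTri.

Lemma lc_mu_prob (pi : bool -> R) (chi : bool -> bool * bool -> R) :
  is_prob pi -> is_markov chi -> is_prob (lc_mu pi chi).
Proof.
move=> [pi_ge0 pi_sum] chi_markov; split=> [j|].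
  by rewrite sumr_ge0 // => i _; rewrite mulr_ge0 // (chi_markov i).1.
rewrite /lc_mu exchange_big /=.
by under eq_bigr do rewrite -mulr_sumr (chi_markov _).2 mulr1.
Qed.

Lemma mass00_add_cond_mass (mu : bool * bool -> R) :
  is_prob mu -> mu (false, false) + cond_mass mu = 1.
Proof. by case=> _; rewrite big_pair_bool /cond_mass /=; lra. Qed.

Section LatentClass.

Variables (pi : bool -> R) (chi : bool -> bool * bool -> R).

Lemma chi1_add i : is_prob (chi i) -> chi1 chi false i + chi1 chi true i = 1.
Proof. by case=> _; rewrite big_pair_bool /chi1 /=; lra. Qed.

Lemma chi2_add i : is_prob (chi i) -> chi2 chi false i + chi2 chi true i = 1.
Proof. by case=> _; rewrite big_pair_bool /chi2 /=; lra. Qed.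

Lemma chi1_ge0 iota i : is_prob (chi i) -> 0 <= chi1 chi iota i.
Proof. by case=> chi_ge0 _; rewrite addr_ge0. Qed.

Lemma chi2_ge0 iota i : is_prob (chi i) -> 0 <= chi2 chi iota i.
Proof. by case=> chi_ge0 _; rewrite addr_ge0. Qed.

Lemma chi1_le1 iota i : is_prob (chi i) -> chi1 chi iota i <= 1.
Proof.
move=> chi_i; have := chi1_add chi_i.
by have := chi1_ge0 false chi_i; have := chi1_ge0 true chi_i; case: iota; lra.
Qed.

Lemma chi2_le1 iota i : is_prob (chi i) -> chi2 chi iota i <= 1.
Proof.
move=> chi_i; have := chi2_add chi_i.
by have := chi2_ge0 false chi_i; have := chi2_ge0 true chi_i; case: iota; lra.
Qed.

Hypothesis theta : Theta2le pi chi.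

Let mu := lc_mu pi chi.

(* With a := chi1 1|1, b := chi2 1|1, a0 := chi1 1|0 and b0 := chi2 1|0 the two
   sides are a (pi0 b0 + pi1 b) and pi0 a0 + pi1 a; compare termwise using
   a b <= a, a b0 <= b0 and b0 <= a0, the last being the restriction defining
   Theta_{2,<=}. *)
Lemma chi1_mul_lc_mu_le :
  chi1 chi true true * (mu (false, true) + mu (true, true))
  <= mu (true, false) + mu (true, true).
Proof.
have [[pi_ge0 _] [chi_markov le00]] := theta.
have -> : mu (true, false) + mu (true, true)
    = pi false * chi1 chi true false + pi true * chi1 chi true true.
  by rewrite /mu /lc_mu !big_bool /chi1 /=; ring.
have -> : mu (false, true) + mu (true, true)
    = pi false * chi2 chi true false + pi true * chi2 chi true true.
  by rewrite /mu /lc_mu !big_bool /chi2 /=; ring.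
have chi_false := chi_markov false; have chi_true := chi_markov true.
have b0_le_a0 : chi2 chi true false <= chi1 chi true false.
  by have := chi1_add chi_false; have := chi2_add chi_false; lra.
have ab_le_a : chi1 chi true true * chi2 chi true true <= chi1 chi true true.
  by rewrite ler_piMr ?chi1_ge0 ?chi2_le1.
have ab0_le_b0 : chi1 chi true true * chi2 chi true false <= chi2 chi true false.
  by rewrite ler_piMl ?chi2_ge0 ?chi1_le1.
have := pi_ge0 false; have := pi_ge0 true; nra.
Qed.

End LatentClass.

Lemma le_tri_param (q : 'I_3 -> R) (c : R) :
  is_prob q -> c <= 1 -> c * (1 - q ord0) <= 1 - q (inord 1) -> (c%:E <= tri_param q)%E.
Proof.
move=> [q_ge0 q_sum] c_le1 c_le; rewrite /tri_param /cdiv le_min lee_fin c_le1 andbT.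
case: eqP => [_|/eqP q0_neq1]; first exact: leey.
have q0_lt1 : 0 < 1 - q ord0.
  rewrite lt_def q0_neq1 /=; move: q_sum; rewrite big_ord3.
  by have := q_ge0 (inord 1); have := q_ge0 (inord 2); lra.
by rewrite lee_fin ler_pdivlMr.
Qed.

Lemma chi1_le_tri_param (pi : bool -> R) (chi : bool -> bool * bool -> R) :
  Theta2le pi chi ->
  ((chi1 chi true true)%:E <= tri_param (cond_tri (lc_mu pi chi)))%E.
Proof.
move=> theta; have [pi_prob [chi_markov _]] := theta.
have [mu_ge0 _] := lc_mu_prob pi_prob chi_markov.
have [q_ge0 q_sum] := cond_tri_prob mu_ge0.
apply: le_tri_param => //; first exact: chi1_le1.
rewrite big_ord3 addr0 in q_sum.
have -> : 1 - cond_tri (lc_mu pi chi) ord0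
    = cond_tri (lc_mu pi chi) (inord 1) + cond_tri (lc_mu pi chi) (inord 2) by lra.
have -> : 1 - cond_tri (lc_mu pi chi) (inord 1)
    = cond_tri (lc_mu pi chi) ord0 + cond_tri (lc_mu pi chi) (inord 2) by lra.
have := chi1_mul_lc_mu_le theta; have [c0 c1 c2] := tri_cellE.
rewrite -c0 -c1 -c2 !(mu_tri_cell mu_ge0) -!mulrDr mulrCA.
have [s0 _|s_neq0] := eqVneq (cond_mass (lc_mu pi chi)) 0.
  by rewrite /cond_tri s0 eqxx !inordK //= add0r mulr1 chi1_le1.
by rewrite ler_pM2l // lt_def s_neq0 cond_mass_ge0.
Qed.

End TrinomialReduction.

Theorem theorem2 (R : realType) (beta : R) (n : nat)
  (u : nat -> nat -> nat -> \bar R) :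
  0 <= beta <= 1 ->
  (forall k1 k2 k3 : nat, (k1 + k2 + k3 <= n)%N -> (0 <= u k1 k2 k3)%E) ->
  (forall m : nat, (m <= n)%N ->
     forall p : 'I_3 -> R, is_prob p ->
       beta <= multinom m p
                 (fun k => (tri_param p <= u (k ord0) (k (inord 1)) (k (inord 2)))%E)) ->
  forall (pi : bool -> R) (chi : bool -> bool * bool -> R),
    Theta2le pi chi ->
    beta <= multinom n (lc_mu pi chi)
              (fun k => ((chi1 chi true true)%:E <=
                         u (k (true, false)) (k (false, true)) (k (true, true)))%E).
Proof.
move=> _ _ u_conf pi chi theta; have [pi_prob [chi_markov _]] := theta.
set mu := lc_mu pi chi; set q := cond_tri mu.
have mu_prob : is_prob mu := lc_mu_prob pi_prob chi_markov.
have [mu_ge0 _] := mu_prob; have q_prob := cond_tri_prob mu_ge0; have [q_ge0 _] := q_prob.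
pose w m := mu (false, false) ^+ (n - m) * cond_mass mu ^+ m *+ 'C(n, m).
have w_sum : \sum_(m < n.+1) w m = 1.
  by rewrite -exprDn mass00_add_cond_mass // expr1n.
pose A a b d := ((chi1 chi true true)%:E <= u a b d)%E.
apply: le_trans _ (multinom_ge_mixture n A mu_ge0 (mu_tri_cell mu_ge0)).
rewrite -[leLHS]mul1r -w_sum mulr_suml; apply: ler_sum => m _.
have le_mn : (m <= n)%N by rewrite -ltnS.
rewrite ler_wpM2l ?mulrn_wge0 ?mulr_ge0 ?exprn_ge0 ?cond_mass_ge0 //.
apply: le_trans (u_conf m le_mn q q_prob) (multinom_subset q_ge0 _) => k.
exact: le_trans (chi1_le_tri_param theta).
Qed.
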